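(* Consider the opinion--action model described in the context, with $\phi\in(0,1)$ and arbitrary initial values $x_i(0),y_i(0)\in[0,1]$, and let $P(t)$, $t\ge 1$, be its augmented state matrices and $\mathbf{z}(t)$ its augmented state. Suppose there exists a finite time $T\in\mathbb{Z}_{>0}$ after which the structure of the digraph $\mathcal{G}(P(t))$ stabilizes, i.e., for all $t\ge T$, $\mathcal{G}(P(t))$ has a fixed number of strongly connected components and the node set of each strongly connected component is the same for all $t\ge T$. Then the system converges to one of the following steady states: (i) Consensus: if $\mathcal{G}(P(t))$ remains strongly connected (for $t\ge T$), then for every $i\in\{1,\dots,2n\}$ the limit $z_i^\ast=\lim_{t\to\infty}z_i(t)$ exists and $z_i^\ast=z_j^\ast$ for all $i,j\in\{1,\dots,2n\}$. (ii) Clustering: if the condensation digraph of $\mathcal{G}(P(t))$ (for $t\ge T$) consists of one sink and one or more singleton sources, then, letting $\Theta$ be the set of nodes forming singleton sources and $\Omega$ the set of nodes of the sink component, $z_i(t)=z_i(T)$ for all $i\in\Theta$ and all $t\ge T$, and $\lim_{t\to\infty}\mathrm{dist}\big(z_j(t),\operatorname{conv}\{z_i(T)\mid i\in\Theta\}\big)=0$ for all $j\in\Omega$.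
   Context: Fix an integer $n\ge 1$, agent set $\mathcal{V}=\{1,\dots,n\}$, a confidence threshold $\epsilon\in[0,1]$ and a decision weight $\phi\in[0,1]$. Each agent $i$ has opinion $x_i(t)\in[0,1]$ and action $y_i(t)\in[0,1]$. For $t\in\mathbb{Z}_{\ge0}$ the model evolves by: $\mathcal{N}_i(t)=\{j\in\mathcal{V}\mid j\neq i,\ |x_i(t)-y_j(t)|\le\epsilon\}$; $x_i(t+1)=\frac{x_i(t)+\sum_{j\in\mathcal{N}_i(t)}y_j(t)}{|\mathcal{N}_i(t)|+1}$; $y_i(t+1)=\phi\,x_i(t+1)+(1-\phi)\,y_{\mathrm{avg}}(t)$ with $y_{\mathrm{avg}}(t)=\frac1n\sum_{k=1}^n y_k(t)$. For $t\ge1$ the augmented state is $\mathbf{z}(t)\in\mathbb{R}^{2n}$ with $z_i(t)=x_i(t)$ and $z_{n+i}(t)=y_i(t-1)$ for $i\in\mathcal{V}$; it satisfies $\mathbf{z}(t+1)=P(t)\mathbf{z}(t)$ for $t\ge1$, where $P(t)=\begin{bmatrix}P_{11}(t)&P_{12}(t)\\ P_{21}&P_{22}\end{bmatrix}$ with $n\times n$ blocks: $[P_{11}(t)]_{ij}=\frac{1}{|\mathcal{N}_i(t)|+1}$ if $j=i$, $\frac{\phi}{|\mathcal{N}_i(t)|+1}$ if $j\in\mathcal{N}_i(t)$, and $0$ otherwise; $[P_{12}(t)]_{ij}=\frac{(1-\phi)|\mathcal{N}_i(t)|}{(|\mathcal{N}_i(t)|+1)n}$ for all $i,j$; $P_{21}=\phi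 I_n$; $P_{22}=\frac{1-\phi}{n}\mathbf{1}_n\mathbf{1}_n^\top$. For a nonnegative matrix $A\in\mathbb{R}^{m\times m}$, $\mathcal{G}(A)$ is the digraph on $\{1,\dots,m\}$ with a directed edge $(j,i)$ (from $j$ to $i$) iff $a_{ij}>0$. A strongly connected component (SCC) is a maximal strongly connected subgraph; the condensation digraph has the SCCs as nodes and an edge from SCC$_a$ to SCC$_b$ ($a\ne b$) iff some node of SCC$_a$ has an edge to some node of SCC$_b$. A source is a node with no incoming edges, a sink a node with no outgoing edges; a singleton SCC has one node. $\operatorname{conv}$ denotes convex hull and $\mathrm{dist}(x,S)=\inf_{y\in S}|x-y|$. *)

From HB Require Import structures.
From mathcomp Require Import all_boot all_order all_algebra.
From mathcomp Require Import all_classical all_reals all_analysis.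
Set Implicit Arguments. Unset Strict Implicit. Unset Printing Implicit Defensive.
Import Order.TTheory GRing.Theory Num.Theory.
Local Open Scope ring_scope.

Section Model.
Variables (R : realType) (n : nat) (eps phi : R).

Definition nbrs (x y : 'I_n -> R) (i : 'I_n) : {set 'I_n} :=
  [set j | (j != i) && (`|x i - y j| <= eps)].

Definition yavg (y : 'I_n -> R) : R := (\sum_(k < n) y k) / n%:R.

Definition step (xy : ('I_n -> R) * ('I_n -> R)) : ('I_n -> R) * ('I_n -> R) :=
  let x := xy.1 in let y := xy.2 in
  let x' := fun i => (x i + \sum_(j in nbrs x y i) y j) / (#|nbrs x y i|%:R + 1) in
  (x', fun i => phi * x' i + (1 - phi) * yavg y).

Fixpoint state (x0 y0 : 'I_n -> R) (t : nat) : ('I_n -> R) * ('I_n -> R) :=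
  match t with 0 => (x0, y0) | t'.+1 => step (state x0 y0 t') end.

Definition xs x0 y0 t := (state x0 y0 t).1.
Definition ys x0 y0 t := (state x0 y0 t).2.

(* Augmented state z(t) (meaningful for t >= 1):
   z_i(t) = x_i(t), z_{n+i}(t) = y_i(t-1). *)
Definition zs x0 y0 (t : nat) (k : 'I_(n + n)) : R :=
  match fintype.split k with
  | inl i => xs x0 y0 t i
  | inr i => ys x0 y0 t.-1 i
  end.

Definition Pmat x0 y0 (t : nat) : 'M[R]_(n + n) :=
  let N := nbrs (xs x0 y0 t) (ys x0 y0 t) in
  block_mx
    (\matrix_(i, j) (if j == i then (#|N i|%:R + 1)^-1
                     else if j \in N i then phi / (#|N i|%:R + 1) else 0))
    (\matrix_(i, j) ((1 - phi) * #|N i|%:R / ((#|N i|%:R + 1) * n%:R)))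
    (phi%:M)
    (\matrix_(i, j) ((1 - phi) / n%:R)).
End Model.

Section Graph.
Variables (R : realType) (m : nat) (A : 'M[R]_m).

Definition gadj : rel 'I_m := fun j i => 0 < A i j.
Definition reach : rel 'I_m := connect gadj.

Definition scc_of (i : 'I_m) : {set 'I_m} := [set j | reach i j && reach j i].
Definition sccs : {set {set 'I_m}} := [set scc_of i | i : 'I_m].

Definition strongly_connected : Prop := forall i j, reach i j.

Definition cond_edge (C D : {set 'I_m}) : bool :=
  (C != D) && [exists a in C, exists b in D, gadj a b].
Definition is_source (C : {set 'I_m}) : bool :=
  [forall D in sccs, ~~ cond_edge D C].
Definition is_sink (C : {set 'I_m}) : bool :=
  [forall D in sccs, ~~ cond_edge C D].

Definition one_sink_singleton_sources : Prop :=
  exists Om : {set 'I_m},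
    [/\ Om \in sccs, is_sink Om,
        (forall C, C \in sccs -> is_sink C -> C = Om),
        (forall C, C \in sccs -> C != Om -> #|C| = 1%N /\ is_source C)
      & exists C, C \in sccs /\ C != Om].

Definition singleton_source_nodes : {set 'I_m} :=
  \bigcup_(C in sccs | (#|C| == 1%N) && is_source C) C.
Definition sink_nodes : {set 'I_m} :=
  \bigcup_(C in sccs | is_sink C) C.
End Graph.

Section Geom.
Variables (R : realType) (m : nat).
Definition conv_pts (S : {set 'I_m}) (v : 'I_m -> R) : set R :=
  [set x | exists w : 'I_m -> R,
     [/\ forall i, 0 <= w i, forall i, i \notin S -> w i = 0,
         \sum_(i < m) w i = 1 & x = \sum_(i < m) w i * v i]].
Definition dist (x : R) (S : set R) : R := inf [set `|x - y| | y in S].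
End Geom.

From HB Require Import structures.
From mathcomp Require Import all_boot all_order all_algebra.
From mathcomp Require Import all_classical all_reals all_analysis.
From mathcomp Require Import ring lra zify.
Import Order.TTheory GRing.Theory Num.Theory.
Import numFieldNormedType.Exports.
Local Open Scope ring_scope.
Set Implicit Arguments. Unset Strict Implicit. Unset Printing Implicit Defensive.

(* In the digraph of P(t) every y-node receives edges from all
   y-nodes and from its own x-node, and an x-node i receives edges from the
   y-nodes iff N_i(t) is nonempty.  So an x-node with N_i(t) empty is a
   singleton source component, and all other nodes form a single strongly
   connected component; once the components stabilise, the set S of isolated
   agents is fixed and their opinions are frozen.
   If S is empty, one step maps any interval [lo, hi] containing z(t) into an
   interval around the mean action, shorter by the factor (1 + phi) / 2, so all
   coordinates of z(t) converge to a common limit.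
   If S is nonempty, the frozen agent with the largest opinion pulls the mean
   action down by phi / n times the excess of hi over that opinion, so two steps
   shrink the part of [lo, hi] outside the hull of the frozen opinions by the
   factor 1 - (1 - phi) phi / (2 n).
   Lower bounds are upper bounds for the dynamics negated, z |-> - z. *)

Lemma connect_sourceless (T : finType) (e : rel T) (k b : T) :
  (forall a, e a k -> a = k) -> connect e b k -> b = k.
Proof.
move=> in_k /connectP[p]; elim: p b => [|c p IH] b /=; first by move=> _ ->.
by case/andP=> ebc /IH /[apply] ck; apply: in_k; rewrite -ck.
Qed.

Section Condensation.
Variables (R : realType) (m : nat) (A : 'M[R]_m).

Lemma scc_of_refl k : k \in scc_of A k.
Proof. by rewrite inE /reach connect0. Qed.

Lemma scc_of_eq a k : a \in scc_of A k -> scc_of A a = scc_of A k.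
Proof.
rewrite inE /reach => /andP[ka ak]; apply/setP => b; rewrite !inE /reach.
apply/andP/andP => [[ab ba]|[kb bk]]; split.
- exact: connect_trans ka ab.
- exact: connect_trans ba ak.
- exact: connect_trans ak kb.
- exact: connect_trans bk ka.
Qed.

Lemma sccs_scc_of C k : C \in sccs A -> k \in C -> C = scc_of A k.
Proof. by move=> /imsetP[k' _ ->] /scc_of_eq. Qed.

Lemma set1_sccs k : ([set k] \in sccs A) = (scc_of A k == [set k]).
Proof.
apply/idP/eqP => [/sccs_scc_of/(_ (set11 k)) <- //|<-].
exact: imset_f.
Qed.

Lemma scc_of_sourceless k :
  (forall a, gadj A a k -> a = k) -> scc_of A k = [set k].
Proof.
move=> in_k; apply/setP => b; rewrite !inE.
apply/andP/eqP => [[_ /(connect_sourceless in_k)] //|->].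
by rewrite /reach connect0.
Qed.

Lemma singleton_source_nodesP k :
  reflect (forall a, gadj A a k -> a = k) (k \in singleton_source_nodes A).
Proof.
apply: (iffP bigcupP) => [[C /andP[C_scc /andP[/cards1P[c ->] src]]]|in_k].
  rewrite inE => /eqP-> a ak; apply/eqP/negP => /negP ka.
  move/forallP/(_ (scc_of A a))/implyP: src; rewrite imset_f //=.
  move/(_ isT)/negP; apply; apply/andP; split.
    by apply: contra ka => /eqP ac; have := scc_of_refl a; rewrite ac inE.
  by apply/existsP; exists a; rewrite scc_of_refl; apply/existsP; exists c; rewrite set11.
exists [set k]; last exact: set11.
rewrite set1_sccs scc_of_sourceless // eqxx cards1 /=.
apply/forallP => D; apply/implyP => D_scc.
apply/negP => /andP[DK /existsP[a /andP[aD /existsP[b /andP[/set1P -> ak]]]]].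
by move: DK; rewrite (sccs_scc_of D_scc aD) (in_k _ ak) scc_of_sourceless ?eqxx.
Qed.

Lemma singleton_source_nodes_gt0 :
  one_sink_singleton_sources A -> (0 < #|singleton_source_nodes A|)%N.
Proof.
case=> Om [_ _ _ single [C [C_scc /(single C C_scc)[/eqP C1 src]]]].
have /cards1P[c C_c] := C1; apply/card_gt0P; exists c; apply/bigcupP.
by exists C; rewrite ?C_scc ?C1 ?src // C_c set11.
Qed.

End Condensation.

Section AugmentedGraph.
Variables (R : realType) (n : nat) (eps phi : R) (x0 y0 : 'I_n -> R).
Hypothesis phi01 : 0 < phi < 1.

Local Notation P t := (Pmat eps phi x0 y0 t).
Local Notation NB t := (nbrs eps (xs eps phi x0 y0 t) (ys eps phi x0 y0 t)).

Lemma gadj_Pmat_xy t i : gadj (P t) (lshift n i) (rshift n i).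
Proof. by case/andP: phi01 => phi_gt0 _; rewrite /gadj block_mxEdl mxE eqxx. Qed.

Lemma gadj_Pmat_yx t i j :
  (0 < #|NB t i|)%N -> gadj (P t) (rshift n j) (lshift n i).
Proof.
case/andP: phi01 => _ phi_lt1 Ni_gt0.
have n_gt0 : (0 < n)%N by apply: leq_ltn_trans (ltn_ord i).
rewrite /gadj block_mxEur mxE.
by rewrite divr_gt0 ?mulr_gt0 ?subr_gt0 ?ltr0n ?ltr_wpDl ?ler0n.
Qed.

Lemma gadj_Pmat_isolated t i :
  #|NB t i| = 0%N -> forall a, gadj (P t) a (lshift n i) -> a = lshift n i.
Proof.
move=> Ni0 a; rewrite /gadj /Pmat /=.
case: (split_ordP a) => j ->; last by rewrite block_mxEur mxE Ni0 mulr0 mul0r ltxx.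
rewrite block_mxEul mxE.
by case: eqP => [-> //|_]; rewrite (cards0_eq Ni0) inE ltxx.
Qed.

Lemma scc_of_Pmat_x t i :
  (scc_of (P t) (lshift n i) == [set lshift n i]) = (#|NB t i| == 0%N).
Proof.
apply/eqP/eqP => [sccE|Ni0]; last exact/scc_of_sourceless/gadj_Pmat_isolated.
apply/eqP; rewrite eqn0Ngt; apply/negP => Ni.
have : rshift n i \in scc_of (P t) (lshift n i).
  by rewrite inE /reach !connect1 ?gadj_Pmat_xy ?gadj_Pmat_yx.
by rewrite sccE inE eq_rlshift.
Qed.

Lemma singleton_source_nodes_Pmat t :
  singleton_source_nodes (P t) = lshift n @: [set i | #|NB t i| == 0%N].
Proof.
apply/setP => k; apply/singleton_source_nodesP/imsetP => [in_k|[i]].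
  case: (split_ordP k) => i ki; subst k.
    exists i => //; rewrite inE eqn0Ngt; apply/negP => Ni.
    by move/eqP: (in_k _ (gadj_Pmat_yx i Ni)); rewrite eq_rlshift.
  by move/eqP: (in_k _ (gadj_Pmat_xy t i)); rewrite eq_lrshift.
by rewrite inE => /eqP Ni0 ->; apply: gadj_Pmat_isolated.
Qed.

Lemma strongly_connected_Pmat_nbrs t :
  strongly_connected (P t) -> forall i, (0 < #|NB t i|)%N.
Proof.
move=> sc i; rewrite lt0n; apply/negP => /eqP Ni0.
have := connect_sourceless (gadj_Pmat_isolated Ni0) (sc (rshift n i) (lshift n i)).
by move/eqP; rewrite eq_rlshift.
Qed.

End AugmentedGraph.

Section NeighbourMean.
Variables (R : realFieldType) (I : finType).

Lemma ler_sum_card (A : {pred I}) (v : I -> R) V :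
  (forall j, v j <= V) -> \sum_(j in A) v j <= #|A|%:R * V.
Proof.
by move=> vV; apply: le_trans (ler_sum _ (fun j _ => vV j)) _; rewrite sumr_const mulr_natl.
Qed.

Lemma nbr_mean_le (S : {set I}) (u : R) (v : I -> R) H :
  u <= H -> (forall j, v j <= H) -> (u + \sum_(j in S) v j) / (#|S|%:R + 1) <= H.
Proof.
move=> uH /(ler_sum_card S) vH; rewrite ler_pdivrMr ?ltr_wpDl ?ler0n //; lra.
Qed.

Lemma nbr_mean_le_drop (S : {set I}) (u : R) (v : I -> R) H d :
  (0 < #|S|)%N -> 0 <= d -> u <= H -> (forall j, v j <= H - d) ->
  (u + \sum_(j in S) v j) / (#|S|%:R + 1) <= H - d / 2.
Proof.
move=> S_gt0 d_ge0 uH /(ler_sum_card S) vH.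
have S_ge1 : 1 <= #|S|%:R :> R by rewrite ler1n.
rewrite ler_pdivrMr ?ltr_wpDl ?ler0n //; nra.
Qed.

End NeighbourMean.

Section Average.
Variables (R : realType) (n : nat).
Implicit Types (y : 'I_n -> R) (h d : R).

Lemma yavg_le y h : (0 < n)%N -> (forall i, y i <= h) -> yavg y <= h.
Proof.
move=> n_gt0 /(ler_sum_card 'I_n); rewrite card_ord.
by rewrite /yavg ler_pdivrMr ?ltr0n // mulrC.
Qed.

Lemma yavg_le_drop y h d r :
  (forall i, y i <= h) -> y r <= h - d -> yavg y <= h - d / n%:R.
Proof.
move=> yh yr; have n_gt0 : (0 < n)%N by apply: leq_ltn_trans (ltn_ord r).
rewrite /yavg ler_pdivrMr ?ltr0n // mulrBl divfK ?pnatr_eq0 -?lt0n //.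
rewrite (bigD1 r) //=.
have := ler_sum_card (predC1 r) yh; rewrite cardC1 card_ord -subn1 natrB //.
lra.
Qed.

Lemma yavgN y : yavg (fun i => - y i) = - yavg y.
Proof. by rewrite /yavg sumrN mulNr. Qed.

End Average.

Definition consensus_rate (R : realFieldType) (phi : R) : R := (1 + phi) / 2.
Definition cluster_rate (R : realFieldType) (phi : R) (n : nat) : R :=
  1 - (1 - phi) * (phi / n%:R) / 2.

Lemma consensus_rate_itv (R : realFieldType) (phi : R) :
  0 < phi < 1 -> 0 <= consensus_rate phi < 1.
Proof. by case/andP=> phi_gt0 phi_lt1; rewrite /consensus_rate; apply/andP; split; lra. Qed.

Lemma cluster_rate_itv (R : realFieldType) (phi : R) n :
  0 < phi < 1 -> (0 < n)%N -> 0 <= cluster_rate phi n < 1.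
Proof.
case/andP=> phi_gt0 phi_lt1 n_gt0; rewrite /cluster_rate.
have w_gt0 : 0 < phi / n%:R by rewrite divr_gt0 ?ltr0n.
have w_le_phi : phi / n%:R <= phi by rewrite ler_pdivrMr ?ltr0n // ler_peMr ?ler1n // ltW.
apply/andP; split; nra.
Qed.

Section AveragingStep.
Variables (R : realType) (n : nat) (phi : R).
Hypothesis phi01 : 0 < phi < 1.

(* One step z(t) -> z(t+1) of the augmented dynamics with neighbour sets N,
   where z(t) = (x1, y0) and z(t+1) = (x2, y1). *)
Definition avg_step (N : 'I_n -> {set 'I_n}) (x1 y0 x2 y1 : 'I_n -> R) :=
  (forall i, y1 i = phi * x1 i + (1 - phi) * yavg y0) /\
  (forall i, x2 i = (x1 i + \sum_(j in N i) y1 j) / (#|N i|%:R + 1)).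

Lemma avg_stepN N x1 y0 x2 y1 :
  avg_step N x1 y0 x2 y1 ->
  avg_step N (fun i => - x1 i) (fun i => - y0 i) (fun i => - x2 i) (fun i => - y1 i).
Proof.
case=> Ey Ex; split=> i; first by rewrite Ey yavgN; lra.
by rewrite Ex sumrN -opprD mulNr.
Qed.

Lemma avg_step_isolated N x1 y0 x2 y1 i :
  avg_step N x1 y0 x2 y1 -> #|N i| = 0%N -> x2 i = x1 i.
Proof.
by case=> _ Ex Ni0; rewrite Ex (cards0_eq Ni0) big_set0 cards0 addr0 add0r divr1.
Qed.

Lemma avg_step_le N x1 y0 x2 y1 h :
  avg_step N x1 y0 x2 y1 -> (forall i, x1 i <= h) -> (forall i, y0 i <= h) ->
  (forall i, y1 i <= h) /\ (forall i, x2 i <= h).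
Proof.
case/andP: phi01 => phi_gt0 phi_lt1 [Ey Ex] x1h y0h.
have y1h i : y1 i <= h.
  have := yavg_le (leq_ltn_trans (leq0n i) (ltn_ord i)) y0h.
  rewrite Ey; have := x1h i; nra.
by split=> // i; rewrite Ex nbr_mean_le.
Qed.

Lemma avg_step_le_contract N x1 y0 x2 y1 h :
  avg_step N x1 y0 x2 y1 -> (forall i, 0 < #|N i|)%N ->
  (forall i, x1 i <= h) -> (forall i, y0 i <= h) ->
  let a := yavg y0 in
  (forall i, y1 i <= a + consensus_rate phi * (h - a)) /\
  (forall i, x2 i <= a + consensus_rate phi * (h - a)).
Proof.
case/andP: phi01 => phi_gt0 phi_lt1 [Ey Ex] N_gt0 x1h y0h a.
have y1h i : y1 i <= h - (1 - phi) * (h - a) by rewrite Ey -/a; have := x1h i; nra.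
rewrite /consensus_rate; split=> i.
all: have ah : a <= h := yavg_le (leq_ltn_trans (leq0n i) (ltn_ord i)) y0h.
  by have := y1h i; nra.
rewrite Ex; apply: le_trans (nbr_mean_le_drop (N_gt0 i) _ (x1h i) y1h) _; nra.
Qed.

Lemma avg_step2_le N1 N2 x1 y0 x2 y1 x3 y2 (S : {set 'I_n}) r B h :
  avg_step N1 x1 y0 x2 y1 -> avg_step N2 x2 y1 x3 y2 ->
  (forall i, i \in S -> #|N1 i| = 0%N) -> (forall i, (#|N2 i| == 0%N) = (i \in S)) ->
  r \in S -> (forall i, i \in S -> x1 i <= B) -> 0 <= h ->
  (forall i, x1 i <= B + h) -> (forall i, y0 i <= B + h) ->
  (forall i, y2 i <= B + cluster_rate phi n * h) /\
  (forall i, x3 i <= B + cluster_rate phi n * h).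
Proof.
move=> step1 step2 N1S N2S rS x1B h_ge0 x1h y0h.
case/andP: (phi01) => phi_gt0 phi_lt1.
have n_gt0 : (0 < n)%N := leq_ltn_trans (leq0n r) (ltn_ord r).
have /andP[c_ge0 _] := cluster_rate_itv phi01 n_gt0.
have [y1h x2h] := avg_step_le step1 x1h y0h.
case: (step1) (step2) => Ey1 _ [Ey2 Ex3].
rewrite /cluster_rate in c_ge0 *; set w := phi / n%:R in c_ge0 *.
have w_ge0 : 0 <= w by rewrite divr_ge0 ?ler0n // ltW.
have d_ge0 : 0 <= (1 - phi) * w * h by have := mulr_ge0 w_ge0 h_ge0; nra.
have y1r : y1 r <= B + h - phi * h.
  by have := yavg_le n_gt0 y0h; rewrite Ey1; have := x1B r rS; nra.
have y2h i : y2 i <= B + h - (1 - phi) * w * h.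
  have := yavg_le_drop y1h y1r; rewrite mulrAC -/w Ey2; have := x2h i; nra.
split=> i; first by have := y2h i; lra.
have [iS|iNS] := boolP (i \in S).
  have x2i : x2 i = x1 i := avg_step_isolated step1 (N1S i iS).
  have x3i : x3 i = x2 i by apply: (avg_step_isolated step2); apply/eqP; rewrite N2S.
  by rewrite x3i x2i; have := x1B i iS; nra.
have N2i : (0 < #|N2 i|)%N by rewrite lt0n N2S.
by rewrite Ex3; apply: le_trans (nbr_mean_le_drop N2i d_ge0 (x2h i) y2h) _; lra.
Qed.

End AveragingStep.

Local Open Scope classical_set_scope.

Lemma geometric_lt (R : realType) (q D e : R) :
  0 <= q < 1 -> 0 < e -> exists k, q ^+ k * D < e.
Proof.
case/andP=> q_ge0 q_lt1 e_gt0.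
have : (fun k => q ^+ k * D) @ \oo --> 0 * D.
  by apply: cvgM; [apply: cvg_expr; rewrite ger0_norm | exact: cvg_cst].
rewrite mul0r => /cvgrPdist_lt/(_ e e_gt0)[N _ /(_ N (leqnn N))].
by rewrite /= sub0r normrN => /(le_lt_trans (ler_norm _)); exists N.
Qed.

Lemma cvgn_common_limit (R : realType) (I : Type) (f : I -> nat -> R) :
  (forall e, 0 < e -> exists N, forall i j s t,
     (N <= s)%N -> (N <= t)%N -> `|f i s - f j t| < e) ->
  (forall i, cvgn (f i)) /\ (forall i j, limn (f i) = limn (f j)).
Proof.
move=> close.
have cvf i : cvgn (f i).
  apply/cauchy_cvgP/cauchy_exP => e e_gt0; have [N closeN] := close e e_gt0.
  by exists (f i N), N => // t /= Nt; apply: closeN.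
split=> // i j; apply/eqP; rewrite -subr_eq0 -limB //; apply/eqP/cvg_lim => //.
apply/cvgrPdist_lt => e e_gt0; have [N closeN] := close e e_gt0.
by exists N => // t /= Nt; rewrite sub0r normrN; apply: closeN.
Qed.

Section ConvexHull.
Variables (R : realType) (m : nat).
Implicit Types (x y d : R) (S : set R).

Lemma dist_ge0 x S : 0 <= dist x S.
Proof.
rewrite /dist; have [->|/set0P[y Sy]] := eqVneq S set0; first by rewrite image_set0 inf0.
by apply: lb_le_inf => [|_ [w _ <-]]; first by exists `|x - y|, y.
Qed.

Lemma dist_le x y S : S y -> dist x S <= `|x - y|.
Proof. by move=> Sy; apply: ge_inf; [exists 0 => _ [w _ <-] | exists y]. Qed.

Lemma conv_pts_segment (Th : {set 'I_m}) (v : 'I_m -> R) p r l :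
  p \in Th -> r \in Th -> 0 <= l <= 1 -> conv_pts Th v ((1 - l) * v p + l * v r).
Proof.
move=> pTh rTh /andP[l_ge0 l_le1].
pose w i : R := (1 - l) * (i == p)%:R + l * (i == r)%:R.
have delta (f : 'I_m -> R) q : \sum_i (i == q)%:R * f i = f q.
  by rewrite (bigD1 q) //= eqxx mul1r big1 ?addr0 // => i /negbTE->; rewrite mul0r.
have wE f : \sum_i w i * f i = (1 - l) * f p + l * f r.
  under eq_bigr do rewrite mulrDl -!mulrA.
  by rewrite big_split /= -!mulr_sumr !delta.
exists w; split.
- by move=> i; rewrite addr_ge0 ?mulr_ge0 ?ler0n ?subr_ge0.
- move=> i iTh; rewrite /w !(introF eqP) ?mulr0 ?addr0 // => eq_i; subst i.
    by rewrite rTh in iTh.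
  by rewrite pTh in iTh.
- by have := wE (fun=> 1); under eq_bigr do rewrite mulr1; move=> ->; lra.
- by rewrite wE.
Qed.

Lemma dist_conv_pts_le (Th : {set 'I_m}) (v : 'I_m -> R) p r x d :
  p \in Th -> r \in Th -> 0 <= d -> v p - d <= x <= v r + d ->
  dist x (conv_pts Th v) <= d.
Proof.
move=> pTh rTh d_ge0 /andP[px xr].
have in_p : conv_pts Th v (v p).
  have := conv_pts_segment v pTh rTh (l := 0); rewrite subr0 mul1r mul0r addr0.
  by apply; rewrite lexx ler01.
have in_r : conv_pts Th v (v r).
  have := conv_pts_segment v pTh rTh (l := 1); rewrite subrr mul0r mul1r add0r.
  by apply; rewrite lexx ler01.
have [xp|px'] := lerP x (v p).
  by apply: le_trans (dist_le x in_p) _; rewrite ler_norml; apply/andP; split; lra.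
have [rx|xr'] := lerP (v r) x.
  by apply: le_trans (dist_le x in_r) _; rewrite ler_norml; apply/andP; split; lra.
pose l := (x - v p) / (v r - v p).
have lE : l * (v r - v p) = x - v p by rewrite divfK // subr_eq0 gt_eqF // (lt_trans px').
have l01 : 0 <= l <= 1.
  by rewrite divr_ge0 ?ler_pdivrMr ?subr_gt0 ?mul1r ?subr_ge0 /=; lra.
apply: le_trans (dist_le x (conv_pts_segment v pTh rTh l01)) _.
by rewrite (_ : (1 - l) * v p + l * v r = x) ?subrr ?normr0 //; move: lE; rewrite mulrBr; lra.
Qed.

End ConvexHull.

Section Trajectory.
Variables (R : realType) (n : nat) (eps phi : R) (x0 y0 : 'I_n -> R).
Hypothesis phi01 : 0 < phi < 1.

Local Notation X t := (xs eps phi x0 y0 t).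
Local Notation Y t := (ys eps phi x0 y0 t).
Local Notation z := (zs eps phi x0 y0).
Local Notation NB t := (nbrs eps (X t) (Y t)).

Lemma avg_step_xs s : avg_step phi (NB s.+1) (X s.+1) (Y s) (X s.+2) (Y s.+1).
Proof. by split. Qed.

Lemma zs_lshift t i : z t (lshift n i) = X t i.
Proof. by rewrite /zs (unsplitK (inl i : 'I_n + 'I_n)). Qed.

Lemma zs_rshift t i : z t.+1 (rshift n i) = Y t i.
Proof. by rewrite /zs (unsplitK (inr i : 'I_n + 'I_n)). Qed.

(* Indexed so that [trapped s] constrains z(s + 1) = (x(s + 1), y(s)). *)
Definition trapped s lo hi :=
  [/\ forall i, X s.+1 i <= hi, forall i, Y s i <= hi,
      forall i, lo <= X s.+1 i & forall i, lo <= Y s i].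

Lemma trapped_exists s : exists lo hi, trapped s lo hi.
Proof.
pose C := \sum_l `|z s.+1 l|.
have zC l : `|z s.+1 l| <= C by rewrite /C (bigD1 l) //= lerDl sumr_ge0.
exists (- C), C; split=> i; [move: (zC (lshift n i)) | move: (zC (rshift n i)) |
  move: (zC (lshift n i)) | move: (zC (rshift n i))].
all: by rewrite ?zs_lshift ?zs_rshift ler_norml => /andP[].
Qed.

Lemma trappedS s lo hi : trapped s lo hi -> trapped s.+1 lo hi.
Proof.
case=> xhi yhi xlo ylo; have step := avg_step_xs s.
have [yhi' xhi'] := avg_step_le phi01 step xhi yhi.
have [ylo' xlo'] : (forall i, - Y s.+1 i <= - lo) /\ (forall i, - X s.+2 i <= - lo).
  by apply: (avg_step_le phi01 (avg_stepN step)) => i; rewrite lerN2.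
by split=> // i; rewrite -lerN2.
Qed.

Lemma trapped_le s t lo hi : (s <= t)%N -> trapped s lo hi -> trapped t lo hi.
Proof.
by move=> /subnK <- tr; elim: (t - s)%N => // d; rewrite addSn; apply: trappedS.
Qed.

Lemma trapped_zs s lo hi : trapped s lo hi -> forall t l, (s < t)%N -> lo <= z t l <= hi.
Proof.
move=> tr [|t] l //; rewrite ltnS => /trapped_le/(_ tr)[xhi yhi xlo ylo].
by rewrite /zs; case: (fintype.split l) => i /=; rewrite ?xlo ?xhi ?ylo ?yhi.
Qed.

Lemma trapped_contract s lo hi :
  (forall i, 0 < #|NB s.+1 i|)%N -> trapped s lo hi ->
  exists lo' hi', hi' - lo' = consensus_rate phi * (hi - lo) /\ trapped s.+1 lo' hi'.
Proof.
move=> N_gt0 [xhi yhi xlo ylo]; have step := avg_step_xs s.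
have xlo_N i : - X s.+1 i <= - lo by rewrite lerN2.
have ylo_N i : - Y s i <= - lo by rewrite lerN2.
have [yhi' xhi'] := avg_step_le_contract phi01 step N_gt0 xhi yhi.
have [ylo' xlo'] := avg_step_le_contract phi01 (avg_stepN step) N_gt0 xlo_N ylo_N.
rewrite /= yavgN in ylo' xlo'; set a := yavg (Y s) in yhi' xhi' ylo' xlo'.
exists (a + consensus_rate phi * (lo - a)), (a + consensus_rate phi * (hi - a)).
split; first by ring.
by split=> i; [move: (xhi' i) | move: (yhi' i) | move: (xlo' i) | move: (ylo' i)]; lra.
Qed.

Lemma trapped_consensus T' lo hi :
  (forall t, (T' < t)%N -> forall i, 0 < #|NB t i|)%N -> trapped T' lo hi ->
  forall k, exists lo' hi',
    hi' - lo' = consensus_rate phi ^+ k * (hi - lo) /\ trapped (T' + k) lo' hi'.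
Proof.
move=> N_gt0 tr0; elim=> [|k [lo' [hi' [w tr]]]].
  by exists lo, hi; rewrite addn0 expr0 mul1r.
have N_k : forall i, (0 < #|NB (T' + k).+1 i|)%N by apply: N_gt0; rewrite ltnS leq_addr.
have [lo'' [hi'' [w' tr']]] := trapped_contract N_k tr.
by exists lo'', hi''; rewrite addnS w' w exprS mulrA.
Qed.

Lemma consensus T' :
  (forall t, (T' < t)%N -> forall i, 0 < #|NB t i|)%N ->
  (forall l, cvgn (z^~ l)) /\ (forall l l', limn (z^~ l) = limn (z^~ l')).
Proof.
move=> N_gt0; apply: cvgn_common_limit => e e_gt0.
have [lo [hi tr0]] := trapped_exists T'.
have [k lt_e] := geometric_lt (hi - lo) (consensus_rate_itv phi01) e_gt0.
have [lo' [hi' [w tr]]] := trapped_consensus N_gt0 tr0 k.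
exists (T' + k).+1 => l l' s t s_ge t_ge.
have /andP[zs_lo zs_hi] := trapped_zs tr l s_ge.
have /andP[zt_lo zt_hi] := trapped_zs tr l' t_ge.
by rewrite ltr_norml; apply/andP; split; lra.
Qed.

Section Clustering.
Variables (T' : nat) (S : {set 'I_n}).
Hypothesis isolatedE : forall t, (T' < t)%N -> forall i, (#|NB t i| == 0%N) = (i \in S).

Lemma xs_isolated i d : i \in S -> X (T'.+1 + d) i = X T'.+1 i.
Proof.
move=> iS; elim: d => [|d IH]; first by rewrite addn0.
rewrite addnS -IH; apply: (avg_step_isolated (avg_step_xs (T' + d))).
by apply/eqP; rewrite isolatedE // ltnS leq_addr.
Qed.

Local Notation q := (cluster_rate phi n).

Section Extremes.
Variables (p r : 'I_n).
Hypotheses (pS : p \in S) (rS : r \in S).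
Hypotheses (p_min : forall i, i \in S -> X T'.+1 p <= X T'.+1 i)
           (r_max : forall i, i \in S -> X T'.+1 i <= X T'.+1 r).

Local Notation A := (X T'.+1 p).
Local Notation B := (X T'.+1 r).

Lemma trapped_cluster2 s lo hi : (T' <= s)%N -> trapped s lo hi -> lo <= A -> B <= hi ->
  trapped s.+2 (A - q * (A - lo)) (B + q * (hi - B)).
Proof.
move=> T's [xhi yhi xlo ylo] loA Bhi.
have xS i : i \in S -> X s.+1 i = X T'.+1 i.
  by move=> iS; have := xs_isolated (s - T') iS; rewrite addSn subnKC.
have N1 i : i \in S -> #|NB s.+1 i| = 0%N by move=> iS; apply/eqP; rewrite isolatedE.
have N2 i : (#|NB s.+2 i| == 0%N) = (i \in S) by rewrite isolatedE // ltnS ltnW.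
have x1B i : i \in S -> X s.+1 i <= B by move=> iS; rewrite xS ?r_max.
have x1A i : i \in S -> - X s.+1 i <= - A by move=> iS; rewrite xS // lerN2 p_min.
have x1h i : X s.+1 i <= B + (hi - B) by have := xhi i; lra.
have y0h i : Y s i <= B + (hi - B) by have := yhi i; lra.
have x1l i : - X s.+1 i <= - A + (A - lo) by have := xlo i; lra.
have y0l i : - Y s i <= - A + (A - lo) by have := ylo i; lra.
have [step1 step2] := (avg_step_xs s, avg_step_xs s.+1).
have [hiB loA'] : 0 <= hi - B /\ 0 <= A - lo by rewrite !subr_ge0.
have [yhi' xhi'] := avg_step2_le phi01 step1 step2 N1 N2 rS x1B hiB x1h y0h.
have [ylo' xlo'] :=
  avg_step2_le phi01 (avg_stepN step1) (avg_stepN step2) N1 N2 pS x1A loA' x1l y0l.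
by split=> i; [move: (xhi' i) | move: (yhi' i) | move: (xlo' i) | move: (ylo' i)]; lra.
Qed.

Lemma trapped_cluster lo hi : trapped T' lo hi ->
  forall k, exists lo' hi', [/\ A - lo' = q ^+ k * (A - lo), hi' - B = q ^+ k * (hi - B)
                             & trapped (T' + 2 * k) lo' hi'].
Proof.
move=> tr0; have [/(_ r) Bhi _ /(_ p) loA _] := tr0.
have /andP[q_ge0 _] := cluster_rate_itv phi01 (leq_ltn_trans (leq0n p) (ltn_ord p)).
elim=> [|k [lo' [hi' [Alo' hiB' tr]]]].
  by exists lo, hi; rewrite muln0 addn0 expr0 !mul1r.
have loA' : lo' <= A.
  have : 0 <= q ^+ k * (A - lo) by rewrite mulr_ge0 ?exprn_ge0 // subr_ge0.
  lra.
have Bhi' : B <= hi'.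
  have : 0 <= q ^+ k * (hi - B) by rewrite mulr_ge0 ?exprn_ge0 // subr_ge0.
  lra.
have := trapped_cluster2 (leq_addr (2 * k) T') tr loA' Bhi'.
rewrite (_ : (T' + 2 * k).+2 = T' + 2 * k.+1)%N; last by lia.
exists (A - q * (A - lo')), (B + q * (hi' - B)); split=> //.
  by rewrite exprS -mulrA -Alo'; lra.
by rewrite exprS -mulrA -hiB'; lra.
Qed.

End Extremes.

Lemma clustering : (0 < #|S|)%N -> forall l,
  (fun t => dist (z t l) (conv_pts (lshift n @: S) (z T'.+1))) @ \oo --> 0.
Proof.
move=> /card_gt0P[i0 i0S] l.
have [p pS p_min] := arg_minP (fun i => X T'.+1 i) i0S.
have [r rS r_max] := arg_maxP (fun i => X T'.+1 i) i0S.
have q01 := cluster_rate_itv phi01 (leq_ltn_trans (leq0n p) (ltn_ord p)).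
have /andP[q_ge0 _] := q01.
have [lo [hi tr0]] := trapped_exists T'.
pose D := X T'.+1 p - lo + (hi - X T'.+1 r).
apply/cvgrPdist_lt => e e_gt0.
have [k lt_e] := geometric_lt D q01 e_gt0.
have [lo' [hi' [Alo' hiB' tr]]] := trapped_cluster pS rS p_min r_max tr0 k.
have [/(_ r) Bhi _ /(_ p) loA _] := tr0.
exists (T' + 2 * k).+1 => // t /= t_ge.
have /andP[zlo zhi] := trapped_zs tr l t_ge.
rewrite sub0r normrN ger0_norm ?dist_ge0 //; apply: le_lt_trans lt_e.
apply: (dist_conv_pts_le (imset_f _ pS) (imset_f _ rS)); rewrite ?zs_lshift.
  by apply: mulr_ge0; rewrite ?exprn_ge0 // /D; lra.
have : 0 <= q ^+ k * (X T'.+1 p - lo) by rewrite mulr_ge0 ?exprn_ge0 // subr_ge0.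
have : 0 <= q ^+ k * (hi - X T'.+1 r) by rewrite mulr_ge0 ?exprn_ge0 // subr_ge0.
by rewrite /D mulrDr => ? ?; apply/andP; split; lra.
Qed.

End Clustering.

End Trajectory.

Theorem theorem3 (R : realType) (n : nat) (eps phi : R)
    (x0 y0 : 'I_n -> R) (T : nat) :
  0 <= eps <= 1 -> 0 < phi < 1 ->
  (forall i, 0 <= x0 i <= 1) -> (forall i, 0 <= y0 i <= 1) ->
  (0 < T)%N ->
  (forall t, (T <= t)%N -> sccs (Pmat eps phi x0 y0 t) = sccs (Pmat eps phi x0 y0 T)) ->
  let z := zs eps phi x0 y0 in
  let P := Pmat eps phi x0 y0 in
  ((forall t, (T <= t)%N -> strongly_connected (P t)) ->
     (forall i, cvgn (fun t => z t i)) /\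
     (forall i j, limn (fun t => z t i) = limn (fun t => z t j)))
  /\
  ((forall t, (T <= t)%N -> one_sink_singleton_sources (P t)) ->
     let Theta := singleton_source_nodes (P T) in
     let Omega := sink_nodes (P T) in
     (forall i, i \in Theta -> forall t, (T <= t)%N -> z t i = z T i) /\
     (forall j, j \in Omega ->
        (fun t => dist (z t j) (conv_pts Theta (z T))) @ \oo --> (0 : R))).
Proof.
move=> _ phi01 _ _ T_gt0 sccsT z P; rewrite {}/z {}/P.
case: T T_gt0 sccsT => // T' _ sccsT.
pose NB t := nbrs eps (xs eps phi x0 y0 t) (ys eps phi x0 y0 t).
pose S := [set i | #|NB T'.+1 i| == 0%N]%SET.
have isolatedE t : (T' < t)%N -> forall i, (#|NB t i| == 0%N) = (i \in S).
  by move=> T't i; rewrite inE -!(scc_of_Pmat_x eps x0 y0 phi01) -!set1_sccs sccsT.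
have ThetaE : singleton_source_nodes (Pmat eps phi x0 y0 T'.+1) = lshift n @: S.
  exact: singleton_source_nodes_Pmat.
split=> [sc | oss].
  apply: (consensus phi01 (T' := T')) => t /sc.
  exact: strongly_connected_Pmat_nbrs.
rewrite /= ThetaE; split=> [_ /imsetP[i iS ->] t T't | j _].
  by rewrite !zs_lshift -(subnKC T't) (xs_isolated isolatedE).
apply: (clustering phi01 isolatedE).
rewrite -(card_imset _ (@lshift_inj n n)) -ThetaE.
exact/singleton_source_nodes_gt0/oss.
Qed.
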